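(* Let $n\ge2$, $c\in(0,\infty)$, and let $\Sigma_n\in\mathbb{R}^{n\times n}$ have entries $$(\Sigma_n)_{ij}=\frac{\pi}{i+j}+c\,\frac{4\pi^2}{(i+1)(j+1)}\ \text{ if } c\in(0,1],\qquad (\Sigma_n)_{ij}=\frac{\pi}{c(i+j)}+\frac{4\pi^2}{(i+1)(j+1)}\ \text{ if } c\in(1,\infty).$$ Then $\Sigma_n=LU$ with $L=(l_{ij})$, $U=(u_{ij})$ given by $l_{ij}=0$ for $i<j$, $$l_{ij}=\frac{\prod_{k=1}^{j-1}(i-k)\prod_{k=1}^{j}(j+k)}{\prod_{k=1}^{j-1}(j-k)\prod_{k=1}^{j}(i+k)}\quad(i\ge j),$$ $u_{ij}=0$ for $i>j$, $u_{1j}=\frac{\pi(1+2c\pi)}{j+1}$ if $c\in(0,1]$, $u_{1j}=\frac{\pi(1+2c\pi)}{c(j+1)}$ if $c\in(1,\infty)$, and for $1<i\le j$: $$u_{ij}=\frac{\pi\prod_{k=1}^{i-1}(i-k)(j-k)}{(i+j)\prod_{k=1}^{i-1}(i+k)\prod_{k=1}^{i-1}(j+k)}\ \ (c\in(0,1]),\qquad u_{ij}=\frac{\pi\prod_{k=1}^{i-1}(i-k)(j-k)}{c(i+j)\prod_{k=1}^{i-1}(i+k)\prod_{k=1}^{i-1}(j+k)}\ \ (c\in(1,\infty)).$$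
   Context: $\Sigma_n$ is the asymptotic covariance matrix, in the critical regime $t\delta_t^d\to c$, of the ''vector of natural increasing powers'' $(\tilde L_t^{(0)},\dots,\tilde L_t^{(n-1)})$ of normalized length power functionals in dimension $d=2$ (so $\tau_i=i-1$, $\kappa_2=\pi$) for a window of volume $1$. *)

From HB Require Import structures.
From mathcomp Require Import all_boot all_order all_algebra.
From mathcomp Require Import all_classical all_reals all_analysis.
Set Implicit Arguments. Unset Strict Implicit. Unset Printing Implicit Defensive.
Import Order.TTheory GRing.Theory Num.Theory.
Local Open Scope ring_scope.

(* All coefficient functions below use the paper's 1-based indices i, j. *)

Definition sigma_coef (R : realType) (c : R) (i j : nat) : R :=
  if c <= 1 then pi / (i + j)%:R + c * (4 * pi ^+ 2) / ((i + 1)%:R * (j + 1)%:R)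
  else pi / (c * (i + j)%:R) + 4 * pi ^+ 2 / ((i + 1)%:R * (j + 1)%:R).

Definition l_coef (R : realType) (i j : nat) : R :=
  if (i < j)%N then 0
  else ((\prod_(1 <= k < j) (i%:R - k%:R)) * (\prod_(1 <= k < j.+1) (j + k)%:R))
     / ((\prod_(1 <= k < j) (j%:R - k%:R)) * (\prod_(1 <= k < j.+1) (i + k)%:R)).

Definition u_coef (R : realType) (c : R) (i j : nat) : R :=
  if (j < i)%N then 0
  else if i == 1%N then
    (if c <= 1 then pi * (1 + 2 * c * pi) / (j + 1)%:R
     else pi * (1 + 2 * c * pi) / (c * (j + 1)%:R))
  else
    (if c <= 1 then
       pi * (\prod_(1 <= k < i) ((i%:R - k%:R) * (j%:R - k%:R)))
       / ((i + j)%:R * (\prod_(1 <= k < i) (i + k)%:R) * (\prod_(1 <= k < i) (j + k)%:R))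
     else
       pi * (\prod_(1 <= k < i) ((i%:R - k%:R) * (j%:R - k%:R)))
       / (c * (i + j)%:R * (\prod_(1 <= k < i) (i + k)%:R) * (\prod_(1 <= k < i) (j + k)%:R))).

Definition SigmaMx (R : realType) (n : nat) (c : R) : 'M[R]_n :=
  \matrix_(i < n, j < n) sigma_coef c i.+1 j.+1.
Definition LMx (R : realType) (n : nat) : 'M[R]_n :=
  \matrix_(i < n, j < n) l_coef R i.+1 j.+1.
Definition UMx (R : realType) (n : nat) (c : R) : 'M[R]_n :=
  \matrix_(i < n, j < n) u_coef c i.+1 j.+1.

From HB Require Import structures.
From mathcomp Require Import all_boot all_order all_algebra.
From mathcomp Require Import all_classical all_reals all_analysis.
From mathcomp Require Import ring lra.
Import Order.TTheory GRing.Theory Num.Theory.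
Set Implicit Arguments.
Unset Strict Implicit.
Unset Printing Implicit Defensive.
Local Open Scope ring_scope.

(* Sigma = a C + b v w^T with C_ij = 1/(i+j), v_i = 2/(i+1), w_j = 1/(j+1),
   where a = cauchy_weight c and b = rank_one_weight c, and v is the first
   column of L.  So it suffices that L U_C = C for the Cauchy part U_C of U.
   With R_p = prod_(k<=p) (i-k)(j-k) / (prod_(k<=p) (i+k)(j+k) (i+j)) one has
   l_im u_mj = R_(m-1) - R_m, hence sum_(m<=n) l_im u_mj telescopes to
   R_0 - R_n = 1/(i+j), since R_n contains the factor i - i once i <= n. *)

Section CauchyFactorization.
Variable R : realFieldType.
Implicit Types (x y : R) (m p : nat).

Definition rising x m : R := \prod_(1 <= k < m.+1) (x + k%:R).
Definition falling x m : R := \prod_(1 <= k < m.+1) (x - k%:R).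

Lemma risingS x m : rising x m.+1 = rising x m * (x + m.+1%:R).
Proof. exact: big_nat_recr. Qed.

Lemma fallingS x m : falling x m.+1 = falling x m * (x - m.+1%:R).
Proof. exact: big_nat_recr. Qed.

Lemma rising0 x : rising x 0 = 1.
Proof. exact: big_geq. Qed.

Lemma falling0 x : falling x 0 = 1.
Proof. exact: big_geq. Qed.

Lemma rising_gt0 x m : 0 < x -> 0 < rising x m.
Proof. by move=> x_gt0; apply: prodr_gt0 => k _; rewrite ltr_wpDr. Qed.

Lemma falling_gt0 x m : m%:R < x -> 0 < falling x m.
Proof.
move=> mx; rewrite /falling big_nat_cond; apply: prodr_gt0 => k.
move=> /andP[/andP[_ km] _]; rewrite subr_gt0 (le_lt_trans _ mx) // ler_nat.
by rewrite -ltnS.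
Qed.

Lemma falling_natr_eq0 (i m : nat) : (0 < i <= m)%N -> falling i%:R m = 0.
Proof.
move=> /andP[i_gt0 im]; apply/eqP; rewrite prodf_seq_eq0; apply/hasP.
by exists i; rewrite ?mem_index_iota ?i_gt0 ?ltnS //= subrr eqxx.
Qed.

Lemma rising_natr (i m : nat) :
  rising i%:R m = \prod_(1 <= k < m.+1) (i + k)%:R :> R.
Proof. by apply: eq_bigr => k _; rewrite natrD. Qed.

(* Entry (x, m+1) of L and entry (m+1, y) of the Cauchy part of U. *)
Definition cauchy_l x m : R :=
  falling x m * rising m.+1%:R m.+1 / (falling m.+1%:R m * rising x m.+1).
Definition cauchy_u m y : R :=
  falling m.+1%:R m * falling y m / ((m.+1%:R + y) * rising m.+1%:R m * rising y m).
Definition cauchy_rem x y p : R :=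
  falling x p * falling y p / (rising x p * rising y p * (x + y)).

Lemma cauchy_rem0 x y : cauchy_rem x y 0 = (x + y)^-1.
Proof. by rewrite /cauchy_rem !rising0 !falling0 !mul1r. Qed.

Lemma cauchy_lu_telescope x y m : 0 < x -> 0 < y ->
  cauchy_l x m * cauchy_u m y = cauchy_rem x y m - cauchy_rem x y m.+1.
Proof.
move=> x_gt0 y_gt0; rewrite /cauchy_l /cauchy_u /cauchy_rem.
rewrite !risingS !fallingS.
(* Only (x+z)(y+z) - (x-z)(y-z) = 2z(x+y) is used, so z = m+1 can be abstracted. *)
have := @falling_gt0 m.+1%:R m; rewrite ltr_nat ltnSn => /(_ isT).
have := @rising_gt0 m.+1%:R m (ltr0Sn R m).
have := @rising_gt0 x m x_gt0; have := @rising_gt0 y m y_gt0.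
have := ltr0Sn R m.
move: (falling m.+1%:R m) (rising m.+1%:R m) (rising x m) (rising y m).
move: (falling x m) (falling y m) (m.+1%:R) => Fx Fy z Fm Rm Rx Ry.
move=> z_gt0 Ry_gt0 Rx_gt0 Rm_gt0 Fm_gt0.
field; rewrite !gt_eqF //; lra.
Qed.

Lemma sum_cauchy_lu x y n : 0 < x -> 0 < y ->
  \sum_(m < n) cauchy_l x m * cauchy_u m y = (x + y)^-1 - cauchy_rem x y n.
Proof.
move=> x_gt0 y_gt0.
rewrite -(big_mkord xpredT (fun m => cauchy_l x m * cauchy_u m y)).
rewrite -cauchy_rem0 addrC.
rewrite (@telescope_sumr_eq _ 0 n (fun p => - cauchy_rem x y p)) ?opprK //.
by move=> m _; rewrite cauchy_lu_telescope // opprK addrC.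
Qed.

End CauchyFactorization.

Section Coefficients.
Variable R : realType.

Lemma l_coefE (i m : nat) : l_coef R i.+1 m.+1 = cauchy_l i.+1%:R m.
Proof.
rewrite /l_coef /cauchy_l -!rising_natr; case: ltnP => // im.
by rewrite falling_natr_eq0 ?mul0r.
Qed.

Lemma l_coef_first_col (i : nat) : l_coef R i.+1 1 = 2 / (i.+1 + 1)%:R.
Proof. by rewrite l_coefE /cauchy_l !falling0 !risingS !rising0 !mul1r !natrD. Qed.

Lemma cauchy_rem_natr_eq0 (i n : nat) (y : R) :
  (i < n)%N -> cauchy_rem i.+1%:R y n = 0.
Proof. by move=> ilt; rewrite /cauchy_rem falling_natr_eq0 ?mul0r. Qed.

Lemma sum_l_coef_cauchy_u (n i : nat) (y : R) : (i < n)%N -> 0 < y ->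
  \sum_(k < n) l_coef R i.+1 k.+1 * cauchy_u k y = (i.+1%:R + y)^-1.
Proof.
move=> ilt y_gt0; under eq_bigr => k _ do rewrite l_coefE.
by rewrite sum_cauchy_lu ?ltr0Sn // cauchy_rem_natr_eq0 // subr0.
Qed.

Definition cauchy_weight (c : R) : R := if c <= 1 then pi else pi / c.
Definition rank_one_weight (c : R) : R :=
  if c <= 1 then 2 * c * pi ^+ 2 else 2 * pi ^+ 2.

Lemma sigma_coefE (c : R) (i j : nat) : sigma_coef c i j =
  cauchy_weight c / (i + j)%:R + 2 / (i + 1)%:R * (rank_one_weight c / (j + 1)%:R).
Proof.
by rewrite /sigma_coef /cauchy_weight /rank_one_weight; case: ifP => _;
  rewrite ?invfM; ring.
Qed.

Lemma u_coefE (c : R) (i j : nat) : 0 < c -> u_coef c i.+1 j.+1 =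
  cauchy_weight c * cauchy_u i j.+1%:R
  + (i == 0)%:R * (rank_one_weight c / (j.+1 + 1)%:R).
Proof.
move=> c_gt0; rewrite /u_coef /cauchy_u /cauchy_weight /rank_one_weight.
case: ltnP => [|ij].
  case: i => // i ji; rewrite (@falling_natr_eq0 _ j.+1) /= ?ltnS //.
  by rewrite !mul0r mulr0 mul0r mulr0 addr0.
case: i ij => [|i] _ /=.
  rewrite !falling0 !rising0 !mulr1 !mul1r -natrD [(1 + _)%N]addnC.
  by case: ifP => _; field; rewrite ?gt_eqF // pnatr_eq0 addn1.
rewrite -!rising_natr big_split /= mul0r addr0 natrD.
by rewrite /falling; case: ifP => _; rewrite ?invfM; ring.
Qed.
End Coefficients.


Theorem proposition7p11 (R : realType) (n : nat) (c : R) :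
  (2 <= n)%N -> 0 < c -> SigmaMx n c = LMx R n *m UMx n c.
Proof.
(* The factorization holds for every n. *)
move=> _ c_gt0; apply/matrixP => i j; rewrite !mxE.
under eq_bigr => k _ do rewrite !mxE u_coefE // mulrDr mulrCA.
rewrite big_split /= -mulr_sumr sum_l_coef_cauchy_u ?ltr0Sn // -natrD.
case: n i j => [[]//|n] i j.
rewrite big_ord_recl big1 => [|k _]; last by rewrite lift0 mul0r mulr0.
by rewrite addr0 mul1r l_coef_first_col sigma_coefE.
Qed.
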